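(* Let $D$ be an integral domain with quotient field $K$ and $n\ge1$. Let $\mathcal C_n$ be the set of companion matrices of monic polynomials of degree $n$ in $D[x]$, and $\mathcal I_n\subseteq\mathcal C_n$ the subset of companion matrices of monic degree-$n$ polynomials that are irreducible in $D[x]$. Then (1) $\mathrm{Int}_K(M_n(D))=\mathrm{Int}_K(\mathcal C_n, M_n(D))$; (2) if moreover the intersection of all maximal ideals of $D$ of finite index is $(0)$ (for instance, if $D$ is a Dedekind domain with infinitely many maximal ideals of finite index), then $\mathrm{Int}_K(M_n(D))=\mathrm{Int}_K(\mathcal I_n, M_n(D))$.
   Context: $M_n(D)$ is the ring of $n\times n$ matrices over $D$. For a subset $S\subseteq M_n(D)$, $\mathrm{Int}_K(S,M_n(D))=\{f\in K[x]\mid f(C)\in M_n(D)\text{ for all }C\in S\}$, where $f(C)$ is computed in $M_n(K)$; and $\mathrm{Int}_K(M_n(D))=\mathrm{Int}_K(M_n(D),M_n(D))$. *)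

From HB Require Import structures.
From mathcomp Require Import all_boot all_order all_algebra.
Set Implicit Arguments. Unset Strict Implicit. Unset Printing Implicit Defensive.
Import GRing.Theory.
Local Open Scope ring_scope.

Section Defs.
Variable D : idomainType.
Local Notation K := {fraction D}.

Definition mx_eval (n : nat) (f : {poly K}) (A : 'M[K]_n) : 'M[K]_n :=
  \sum_(i < size f) f`_i *: A ^+ i.

Definition in_MnD (n : nat) (A : 'M[K]_n) : Prop :=
  exists B : 'M[D]_n, A = map_mx (@tofrac D) B.

Definition IntK (n : nat) (S : 'M[D]_n -> Prop) (f : {poly K}) : Prop :=
  forall C : 'M[D]_n, S C -> in_MnD (mx_eval f (map_mx (@tofrac D) C)).

Definition IntK_full (n : nat) (f : {poly K}) : Prop :=
  IntK (fun _ : 'M[D]_n => True) f.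

Definition companion_n (n : nat) (p : {poly D}) (hp : size p = n.+1) : 'M[D]_n :=
  castmx (congr1 predn hp, congr1 predn hp) (companionmx p).

Definition Cn (n : nat) (C : 'M[D]_n) : Prop :=
  exists (p : {poly D}) (hp : size p = n.+1), p \is monic /\ C = companion_n hp.

Definition irreducible_in_polyring (p : {poly D}) : Prop :=
  p != 0 /\ p \isn't a GRing.unit /\
  forall g h : {poly D}, p = g * h -> g \is a GRing.unit \/ h \is a GRing.unit.

Definition In_ (n : nat) (C : 'M[D]_n) : Prop :=
  exists (p : {poly D}) (hp : size p = n.+1),
    [/\ p \is monic, irreducible_in_polyring p & C = companion_n hp].

Definition is_ideal (I : D -> Prop) : Prop :=
  [/\ I 0, (forall x y, I x -> I y -> I (x - y)) & (forall a x, I x -> I (a * x))].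

Definition is_maximal_ideal (I : D -> Prop) : Prop :=
  [/\ is_ideal I, ~ I 1 &
      forall J : D -> Prop, is_ideal J -> (forall x, I x -> J x) ->
        (exists x, J x /\ ~ I x) -> J 1].

Definition finite_index (I : D -> Prop) : Prop :=
  exists s : seq D, forall x : D, exists2 y, y \in s & I (x - y).

Definition fin_max_ideals_trivial_intersection : Prop :=
  forall x : D, (forall I, is_maximal_ideal I -> finite_index I -> I x) -> x = 0.

End Defs.

From HB Require Import structures.
From mathcomp Require Import all_boot all_order all_algebra all_fingroup all_field.
From mathcomp Require Import ring zify.
From Stdlib Require Import Classical ClassicalEpsilon.
Set Implicit Arguments. Unset Strict Implicit. Unset Printing Implicit Defensive.
Import GRing.Theory.
Local Open Scope ring_scope.

(** Write [f] in [K[x]] as [g / d] with [g] in [D[x]] and [0 != d] in [D]; then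
    [f] lies in [Int_K(S, M_n(D))] iff [d] divides (entrywise) [g(C)] for every
    [C] in [S] ([IntK_dvdmod]).  Divisibility by [d] is phrased in any module
    ([dvdmod]) and is preserved by sums, products and polynomial evaluation.
    (1) For any [A], Cayley-Hamilton gives [g(A) = r(A)] with
        [r = g mod chi_A] of degree [< n]; the first row of [r(C)], [C] the
        companion matrix of [chi_A], is the coefficient vector of [r], so [d]
        divides [r] and hence [g(A)] ([dvdmod_horner_from_companions]).
    (2) Given a monic [p] of degree [n], choose a maximal ideal [I] of finite
        index with [d] not in [I]; the finite field [D / I] has an irreducible
        monic [q0] of degree [n]; gluing [p] and a lift of [q0] yields a monic
        [q], irreducible in [D[x]], with [q = p] modulo [d].  Companion matrices
        of [p] and [q] are then congruent modulo [d], which reduces (2) to (1). *)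

Section ModuleDivisibility.
Variables (R : comNzRingType) (V : lmodType R).

Definition dvdmod (d : R) (v : V) : Prop := exists w : V, v = d *: w.

Lemma dvdmod0 d : dvdmod d 0.
Proof. by exists 0; rewrite scaler0. Qed.

Lemma dvdmodD d u v : dvdmod d u -> dvdmod d v -> dvdmod d (u + v).
Proof. by move=> [u' ->] [v' ->]; exists (u' + v'); rewrite scalerDr. Qed.

Lemma dvdmodB d u v : dvdmod d u -> dvdmod d v -> dvdmod d (u - v).
Proof. by move=> [u' ->] [v' ->]; exists (u' - v'); rewrite scalerBr. Qed.

Lemma dvdmodZ d c v : dvdmod d v -> dvdmod d (c *: v).
Proof. by move=> [v' ->]; exists (c *: v'); rewrite !scalerA mulrC. Qed.

Lemma dvdmod_subr d u v : dvdmod d u -> dvdmod d (u - v) -> dvdmod d v.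
Proof. by move=> du duv; rewrite -[v](subKr u); apply: dvdmodB. Qed.

End ModuleDivisibility.

Section AlgebraDivisibility.
Variables (R : comNzRingType) (A : algType R).

Lemma dvdmodMl d (x y : A) : dvdmod d y -> dvdmod d (x * y).
Proof. by move=> [y' ->]; exists (x * y'); rewrite scalerAr. Qed.

Lemma dvdmodMr d (x y : A) : dvdmod d x -> dvdmod d (x * y).
Proof. by move=> [x' ->]; exists (x' * y); rewrite scalerAl. Qed.

Lemma dvdmodXX d (x y : A) k : dvdmod d (x - y) -> dvdmod d (x ^+ k - y ^+ k).
Proof.
move=> dxy; elim: k => [|k IHk]; first by rewrite !expr0 subrr; apply: dvdmod0.
have -> : x ^+ k.+1 - y ^+ k.+1 = x ^+ k * (x - y) + (x ^+ k - y ^+ k) * y.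
  by rewrite mulrBr mulrBl !exprSr addrA subrK.
by apply: dvdmodD; [apply: dvdmodMl | apply: dvdmodMr].
Qed.

End AlgebraDivisibility.

Lemma horner_mx_sum (R : comNzRingType) n' (A : 'M[R]_n'.+1) (p : {poly R}) :
  horner_mx A p = \sum_(i < size p) p`_i *: A ^+ i.
Proof.
rewrite -{1}[p]coefK poly_def rmorph_sum /=; apply: eq_bigr => i _.
by rewrite linearZ /= rmorphXn /= horner_mx_X.
Qed.

Lemma dvdmod_horner_mx (R : comNzRingType) n' d (A B : 'M[R]_n'.+1) (p : {poly R}) :
  dvdmod d (A - B) -> dvdmod d (horner_mx A p - horner_mx B p).
Proof.
move=> dAB; rewrite !horner_mx_sum -sumrB.
apply: big_ind => [|u v|i _]; [exact: dvdmod0 | exact: dvdmodD |].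
by rewrite -scalerBr; apply/dvdmodZ/dvdmodXX.
Qed.

Section FractionsAndIntegerValues.
Variable D : idomainType.
Local Notation K := {fraction D}.
Local Notation "x %:F" := (tofrac x).

Lemma frac_quotient (x : K) : exists a b : D, b != 0 /\ x = a%:F / b%:F.
Proof.
elim/quotW: x => r; exists r.1, r.2; split; first exact: denom_ratioP.
unlock tofrac; rewrite !piE; apply/eqmodP; rewrite /= FracField.equivfE /=.
rewrite /FracField.mulf /FracField.invf !numden_Ratio ?oner_neq0 ?denom_ratioP ?mulf_neq0 //.
  by rewrite !mul1r mulr1 mulrC.
all: by rewrite ?oner_neq0 ?denom_ratioP.
Qed.

Lemma poly_common_denominator (f : {poly K}) :
  exists (d : D) (g : {poly D}), d != 0 /\ f = (d%:F)^-1 *: map_poly (@tofrac D) g.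
Proof.
elim/poly_ind: f => [|f c [d [g [d_neq0 ->]]]].
  by exists 1, 0; rewrite oner_neq0 rmorph0 scaler0.
have [a [b [b_neq0 ->]]] := frac_quotient c.
exists (d * b), ((b *: g) * 'X + (d * a)%:P); split; first by rewrite mulf_neq0.
have dF : d%:F != 0 by rewrite tofrac_eq0.
have bF : b%:F != 0 by rewrite tofrac_eq0.
apply/polyP => i; rewrite !(coefZ, coefD, coefMX, coefC, coef_map) /=.
case: i => [|i] /=; rewrite ?add0r ?addr0 !rmorphM /= invfM.
  by rewrite mulrACA mulVf // mul1r mulrC.
by rewrite -mulrA (mulrA _ b%:F) mulVf // mul1r.
Qed.

Variable n' : nat.

Lemma mx_evalE (f : {poly K}) (A : 'M[K]_n'.+1) : mx_eval f A = horner_mx A f.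
Proof. by rewrite horner_mx_sum. Qed.

Lemma in_MnD_scale (d : D) (B : 'M[D]_n'.+1) : d != 0 ->
  in_MnD ((d%:F)^-1 *: map_mx (@tofrac D) B) <-> dvdmod d B.
Proof.
move=> d_neq0; have dF : d%:F != 0 by rewrite tofrac_eq0.
split => [[B' /matrixP eB] | [B' ->]].
  exists B'; apply/matrixP => i j; move/(_ i j): eB; rewrite !mxE => eBij.
  by apply/eqP; rewrite -tofrac_eq rmorphM /= -eBij mulrA divff // mul1r.
exists B'; apply/matrixP => i j.
by rewrite !mxE rmorphM /= mulrA mulVf // mul1r.
Qed.

Lemma IntK_dvdmod (S : 'M[D]_n'.+1 -> Prop) (f : {poly K}) (d : D) (g : {poly D}) :
  d != 0 -> f = (d%:F)^-1 *: map_poly (@tofrac D) g ->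
  (IntK S f <-> forall C, S C -> dvdmod d (horner_mx C g)).
Proof.
move=> d_neq0 ->.
have evalE (C : 'M[D]_n'.+1) :
    mx_eval ((d%:F)^-1 *: map_poly (@tofrac D) g) (map_mx (@tofrac D) C) =
    (d%:F)^-1 *: map_mx (@tofrac D) (horner_mx C g).
  by rewrite mx_evalE linearZ /= map_horner_mx.
split => IntSf C SC.
  by apply/(in_MnD_scale _ d_neq0); rewrite -evalE; apply: IntSf.
by rewrite evalE; apply/(in_MnD_scale _ d_neq0); apply: IntSf.
Qed.

End FractionsAndIntegerValues.

Section Companion.
Variable D : idomainType.

Lemma companion_nE n (p : {poly D}) (hp : size p = n.+1) i j :
  companion_n hp i j = if i == n.-1 :> nat then - p`_j else (i.+1 == j :> nat)%:R.
Proof. by rewrite castmxE !mxE /= hp. Qed.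

Lemma char_poly_castmx (R : comNzRingType) m k (e : m = k) (M : 'M[R]_m) :
  char_poly (castmx (e, e) M) = char_poly M.
Proof. by case: k / e; rewrite castmx_id. Qed.

Lemma char_poly_companion n (p : {poly D}) (hp : size p = n.+1) :
  p \is monic -> char_poly (companion_n hp) = p.
Proof. by move=> p_monic; rewrite char_poly_castmx companionmxK. Qed.

Lemma dvdmod_companion n (d : D) (p q : {poly D}) (hp : size p = n.+1)
    (hq : size q = n.+1) :
  dvdmod d (q - p) -> dvdmod d (companion_n hq - companion_n hp).
Proof.
move=> [h /polyP dqp]; exists (\matrix_(i, j) if i == n.-1 :> nat then - h`_j else 0).
apply/matrixP => i j; move: (dqp j); rewrite !mxE !companion_nE coefB coefZ.
by case: ifP => _ dqpj; rewrite ?mulr0 ?subrr // -opprD mulrN -dqpj.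
Qed.

Variable n' : nat.

Lemma row0_companion_pow (p : {poly D}) (hp : size p = n'.+2) k :
  (k < n'.+1)%N -> row 0 (companion_n hp ^+ k) = \row_j (k == j :> nat)%:R.
Proof.
elim: k => [|k IHk] lt_k; apply/rowP => j.
  by rewrite !mxE.
rewrite exprSr -mulmxE row_mul IHk ?(ltnW lt_k) // mxE.
rewrite (bigD1 (Ordinal (ltnW lt_k))) //= big1 => [|i /negPf neq_ik]; last first.
  by move: neq_ik; rewrite !mxE -val_eqE /= eq_sym => ->; rewrite mul0r.
by rewrite !mxE eqxx mul1r companion_nE /= (@ltn_eqF k n') // addr0.
Qed.

Lemma row0_horner_companion (p : {poly D}) (hp : size p = n'.+2) (r : {poly D}) :
  (size r <= n'.+1)%N -> row 0 (horner_mx (companion_n hp) r) = poly_rV r.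
Proof.
move=> le_r_n; apply/rowP => j; rewrite horner_mx_sum mxE summxE.
have -> : poly_rV r 0 j = (\sum_(k < size r) r`_k *: 'X^k)`_j.
  by rewrite mxE -poly_def coefK.
rewrite coef_sum; apply: eq_bigr => k _; rewrite mxE coefZ coefXn eq_sym.
have lt_kn : (k < n'.+1)%N := leq_trans (ltn_ord k) le_r_n.
by move/rowP/(_ j): (row0_companion_pow hp lt_kn); rewrite !mxE => ->.
Qed.

(** Part (1): by Cayley-Hamilton, [g(A) = r(A)] for [r = g mod chi_A], and
    [deg r < n]; the first row of [r(C)] for [C] the companion matrix of
    [chi_A] is the coefficient vector of [r].  So if [d] divides [g(C)] for
    all companion matrices [C], then [d] divides [r], hence [g(A)]. *)
Lemma dvdmod_horner_from_companions (d : D) (g : {poly D}) :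
  (forall (p : {poly D}) (hp : size p = n'.+2), p \is monic ->
     dvdmod d (horner_mx (companion_n hp) g)) ->
  forall A : 'M[D]_n'.+1, dvdmod d (horner_mx A g).
Proof.
move=> dvd_gC A; set chi := char_poly A.
have chi_monic : chi \is monic := char_poly_monic A.
have size_chi : size chi = n'.+2 := size_char_poly A.
set r := g %% chi.
have horner_mod (M : 'M[D]_n'.+1) : char_poly M = chi -> horner_mx M g = horner_mx M r.
  move=> chiM; have chiM0 : horner_mx M chi = 0 by rewrite -chiM Cayley_Hamilton.
  by rewrite {1}(Pdiv.IdomainMonic.divp_eq chi_monic g) rmorphD rmorphM /= chiM0 mulr0 add0r.
have le_r_n : (size r <= n'.+1)%N.
  by rewrite -ltnS -size_chi ltn_modpN0 // monic_neq0.
have [B eB] := dvd_gC chi size_chi chi_monic.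
have -> : horner_mx A g = d *: horner_mx A (rVpoly (row 0 B)).
  rewrite horner_mod // -linearZ /= -linearZ /= -linearZ /= -eB.
  by rewrite horner_mod ?char_poly_companion // row0_horner_companion // poly_rV_K.
by exists (horner_mx A (rVpoly (row 0 B))).
Qed.

End Companion.

(** ['X^N - 'X] is separable when [N] vanishes in the field: its derivative
    is [-1]. *)
Lemma separable_Xn_sub_X (R : fieldType) N :
  N%:R = 0 :> R -> separable_poly ('X^N - 'X : {poly R}).
Proof.
move=> N0; rewrite unlock derivB derivXn derivX -mulr_natr -polyC_natr N0 mulr0 sub0r.
by apply/Bezout_coprimepP; exists (0, -1); rewrite /= mul0r add0r mulrNN mulr1 eqpxx.
Qed.

Lemma roots_Xn_sub_X (R : fieldType) N (zs : seq R) :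
  N%:R = 0 :> R -> (1 < N)%N -> 'X^N - 'X %= \prod_(z <- zs) ('X - z%:P) ->
  [/\ uniq zs, size zs = N & forall x, (x \in zs) = (x ^+ N == x)].
Proof.
move=> N0 N_gt1 Dzs; split.
- by rewrite -separable_prod_XsubC -(eqp_separable Dzs) separable_Xn_sub_X.
- move/eqp_size: Dzs; rewrite size_prod_XsubC size_polyDl ?size_polyXn //.
    by case.
  by rewrite size_polyN size_polyX ltnS.
- by move=> x; rewrite -root_prod_XsubC -(eqp_root Dzs) /root !hornerE subr_eq0.
Qed.

Section FiniteFieldExtensions.
Variable F : finFieldType.

(** Powers [#|F| ^ n], [n > 0], are multiples of the characteristic, so they
    vanish in every [F]-algebra. *)
Lemma natr_card_pow_eq0 (A : lalgType F) n : (0 < n)%N -> (#|F| ^ n)%:R = 0 :> A.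
Proof.
move=> n_gt0; have F_gt1 : (1 < #|F|)%N := finNzRing_gt1 F.
have [p _ pcharF] := finPcharP F.
have pcharA : p \in [pchar A] by rewrite pchar_lalg.
have cardF : #|F| = (p ^ logn p #|F|)%N := card_pprimeChar pcharF.
have logF_gt0 : (0 < logn p #|F|)%N.
  by rewrite lt0n; apply: contraTneq F_gt1 => logF0; rewrite cardF logF0.
by rewrite cardF -expnM natrX (pcharf0 pcharA) expr0n muln_eq0 !eqn0Ngt logF_gt0 n_gt0.
Qed.

(** Every [n > 0] is the dimension of a subfield of some finite extension of
    [F]: the roots of ['X^N - 'X], [N = #|F| ^ n], in its splitting field,
    which are the fixed points of the [n]-th power of the Frobenius map. *)
Lemma finField_subfield_of_dim n : (0 < n)%N ->
  exists (L : splittingFieldType F) (E : {subfield L}), \dim E = n.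
Proof.
move=> n_gt0; pose N := (#|F| ^ n)%N.
have N_gt1 : (1 < N)%N by rewrite /N -(exp1n n) ltn_exp2r ?finNzRing_gt1.
have P_neq0 : 'X^N - 'X != 0 :> {poly F}.
  by rewrite -size_poly_eq0 size_polyDl ?size_polyXn // size_polyN size_polyX ltnS.
have [L [zs DP _]] := FinSplittingFieldFor P_neq0.
rewrite rmorphB /= map_polyXn map_polyX in DP.
have [zs_uniq size_zs mem_zs] := roots_Xn_sub_X (natr_card_pow_eq0 L n_gt0) N_gt1 DP.
have [a _ Da] := @finField_galois_generator F L 1%AS {:L} (sub1v _).
rewrite dimv1 expn1 in Da.
have Dan x : (a ^+ n)%g x = x ^+ N.
  rewrite /N; elim: (n) => [|i IHi]; first by rewrite gal_id.
  by rewrite expgSr galM ?memvf // IHi Da ?memvf // -exprM -expnSr.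
pose E := fixedField [set (a ^+ n)%g]; exists L, E.
have memE x : (x \in E) = (x \in zs).
  rewrite mem_zs; apply/fixedFieldP/eqP; rewrite ?memvf //.
    by move=> fix_x; rewrite -Dan fix_x ?set11.
  by move=> xN y /set1P ->; rewrite Dan.
pose fL := finvect_type L.
have := card_vspace (E : {vspace fL}).
have -> : #|(E : {vspace fL})| = size zs.
  rewrite -(card_uniqP (zs_uniq : uniq (zs : seq fL))).
  by apply: eq_card => x; rewrite /= memE.
by rewrite size_zs => /eqP; rewrite eqn_exp2l ?finNzRing_gt1 // => /eqP.
Qed.

(** A subfield [E] of a finite extension of [F] yields a monic irreducible
    polynomial of degree [\dim E] over [F]: the minimal polynomial of a
    primitive element of [E]. *)
Lemma irreducible_poly_of_subfield (L : splittingFieldType F) (E : {subfield L}) :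
  exists q : {poly F}, [/\ q \is monic, size q = (\dim E).+1 & irreducible_poly q].
Proof.
have /and3P[_ sepE _] := finField_galois (sub1v E).
pose z := separable_generator 1 E.
have defE := eq_adjoin_separable_generator sepE (sub1v E).
have [q Dq] := polyOver1P (minPolyOver 1 z).
have size_q : size q = (\dim E).+1.
  by rewrite -(size_map_poly (GRing.in_alg L)) -Dq size_minPoly adjoin_degreeE -defE dimv1 divn1.
exists q; split => //.
  by rewrite -(map_monic (GRing.in_alg L)) -Dq monic_minPoly.
split; first by rewrite size_q ltnS adim_gt0.
move=> g size_g_neq1 dvd_gq.
have Lg : map_poly (GRing.in_alg L) g \is a polyOver 1%VS by apply/polyOver1P; exists g.
have dvd_gL : map_poly (GRing.in_alg L) g %| minPoly 1 z by rewrite Dq dvdp_map.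
have /orP[] := minPoly_irr Lg dvd_gL.
  by rewrite Dq eqp_map.
by move/eqp_size; rewrite size_map_poly size_poly1 => /eqP; rewrite (negPf size_g_neq1).
Qed.

Lemma exists_irreducible_poly n : (0 < n)%N ->
  exists q : {poly F}, [/\ q \is monic, size q = n.+1 & irreducible_poly q].
Proof.
move=> n_gt0; have [L [E <-]] := finField_subfield_of_dim n_gt0.
exact: irreducible_poly_of_subfield.
Qed.

End FiniteFieldExtensions.

Local Open Scope quotient_scope.
Local Notation repr := generic_quotient.repr.

Section MaximalIdeal.
Variables (D : idomainType) (I : D -> Prop).
Hypothesis maxI : is_maximal_ideal I.

Lemma maximal_idealN x : I x -> I (- x).
Proof. by case: maxI => [[I0 IB _] _ _] Ix; rewrite -sub0r; apply: IB. Qed.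

(** Elements outside a maximal ideal are invertible modulo it: the ideal
    generated by [I] and [x] is all of [D]. *)
Lemma maximal_ideal_inverse x : ~ I x -> exists y, I (y * x - 1).
Proof.
case: maxI => [[I0 IB IM] _ Imax] Ix.
pose J z := exists y i, I i /\ z = y * x + i.
have [|||y [i [Ii e1]]] := Imax J; last 1 first.
- by exists y; rewrite e1 opprD addrA subrr add0r; apply: maximal_idealN.
- split; first by exists 0, 0; rewrite mul0r addr0.
    move=> _ _ [y1 [i1 [Ii1 ->]]] [y2 [i2 [Ii2 ->]]].
    by exists (y1 - y2), (i1 - i2); split; [apply: IB | ring].
  move=> a _ [y [i [Ii ->]]].
  by exists (a * y), (a * i); split; [apply: IM | ring].
- by move=> z Iz; exists 0, z; rewrite mul0r add0r.
- by exists x; split => //; exists 1, 0; rewrite mul1r addr0.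
Qed.

(** The ideal [I] as a boolean predicate, so that [D / I] can be formed with
    MathComp's ideal quotients. *)
Definition ideal_pred : {pred D} :=
  fun x => if excluded_middle_informative (I x) then true else false.

Lemma ideal_predP x : reflect (I x) (x \in ideal_pred).
Proof.
by rewrite unfold_in /ideal_pred; case: excluded_middle_informative; constructor.
Qed.

Lemma ideal_pred_closed : idealr_closed ideal_pred.
Proof.
case: maxI => [[I0 IB IM] I1 _]; split; [exact/ideal_predP | exact/ideal_predP|].
move=> a u v /ideal_predP Iu /ideal_predP Iv; apply/ideal_predP.
by rewrite -[v]opprK; apply: IB; [apply: IM | apply: maximal_idealN].
Qed.

HB.instance Definition _ := isIdealr.Build D ideal_pred ideal_pred_closed.

Local Notation Q := {ideal_quot ideal_pred}.

Lemma residue_eq0 x : \pi_Q x = 0 <-> I x.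
Proof.
rewrite -(raddf0 \pi_Q); split => [/eqP|Ix].
  by rewrite -Quotient.idealrBE subr0 => /ideal_predP.
by apply/eqP; rewrite -Quotient.idealrBE subr0; apply/ideal_predP.
Qed.

Lemma residue_eq x y : \pi_Q x = \pi_Q y <-> I (x - y).
Proof.
rewrite -residue_eq0 rmorphB /=; split => [->|/eqP]; first by rewrite subrr.
by rewrite subr_eq0 => /eqP.
Qed.

Definition residue_inv (q : Q) : Q :=
  if q == 0 then 0 else \pi_Q (epsilon (inhabits 0) (fun y : D => I (y * repr q - 1))).

Lemma residue_mulV (q : Q) : q != 0 -> residue_inv q * q = 1.
Proof.
move=> q_neq0; rewrite /residue_inv (negPf q_neq0).
have Iq : ~ I (repr q) by move/residue_eq0; rewrite reprK; apply/eqP.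
have := epsilon_spec (inhabits 0) _ (maximal_ideal_inverse Iq).
set y := epsilon _ _ => Iy.
by rewrite -[q in _ * q]reprK -rmorphM -(rmorph1 \pi_Q); apply/residue_eq.
Qed.

Lemma residue_inv0 : residue_inv 0 = 0.
Proof. by rewrite /residue_inv eqxx. Qed.

HB.instance Definition _ := GRing.ComNzRing_isField.Build Q residue_mulV residue_inv0.

Variable s : seq D.
Hypothesis s_residues : forall x : D, exists2 y, y \in s & I (x - y).

Definition residue_index (q : Q) : option 'I_(size s) :=
  [pick i : 'I_(size s) | repr q - s`_i \in ideal_pred].

Definition residue_of_index (i : option 'I_(size s)) : option Q :=
  omap (fun i : 'I_(size s) => \pi_Q s`_i) i.

Lemma residue_indexK : pcancel residue_index residue_of_index.
Proof.
move=> q; rewrite /residue_index; case: pickP => [i /ideal_predP Ii | none].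
  by congr Some; rewrite -[RHS]reprK; apply/esym/residue_eq.
have [y ys Iy] := s_residues (repr q).
have lt_ys : (index y s < size s)%N by rewrite index_mem.
have := none (Ordinal lt_ys).
by rewrite /= nth_index //; move/ideal_predP: Iy => ->.
Qed.

HB.instance Definition _ := Choice_isCountable.Build Q (pcan_pickleK residue_indexK).
HB.instance Definition _ : isFinite Q := PCanIsFinite residue_indexK.

Definition residue_field : finFieldType := Q.

End MaximalIdeal.

Lemma residue_finite_field (D : idomainType) (I : D -> Prop) :
  is_maximal_ideal I -> finite_index I ->
  exists (F : finFieldType) (pi : {rmorphism D -> F}),
    (forall x, pi x = 0 <-> I x) /\ (forall y, exists x, pi x = y).
Proof.
move=> maxI [s s_residues].
exists (residue_field maxI s_residues), \pi; split; first exact: residue_eq0.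
by move=> y; exists (repr y); apply: reprK.
Qed.

Local Close Scope quotient_scope.

Section IrreducibleLift.
Variables (D : idomainType) (F : fieldType) (pi : {rmorphism D -> F}).

(** A monic polynomial of [D[x]] whose image modulo [pi] is irreducible is
    irreducible in [D[x]]: factors of a monic polynomial have unit leading
    coefficients, so their degrees survive reduction. *)
Lemma irreducible_lift (q : {poly D}) :
  q \is monic -> irreducible_poly (map_poly pi q) -> irreducible_in_polyring q.
Proof.
move=> q_monic [size_q_gt1 irr_q].
have size_pi (k : {poly D}) : lead_coef k \is a GRing.unit -> size (map_poly pi k) = size k.
  move=> uk; apply: size_map_poly_id0; apply: contraTneq (rmorph_unit pi uk) => ->.
  by rewrite unitr0.
have size_piq : size (map_poly pi q) = size q.
  by rewrite size_pi // (monicP q_monic) unitr1.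
split; first exact: monic_neq0.
split; first by rewrite poly_unitE -size_piq gtn_eqF.
move=> g h def_q.
have lead_gh : lead_coef g * lead_coef h = 1 by rewrite -lead_coefM -def_q; apply/eqP.
have ug : lead_coef g \is a GRing.unit by apply/unitrPr; exists (lead_coef h).
have uh : lead_coef h \is a GRing.unit by apply/unitrPr; exists (lead_coef g); rewrite mulrC.
have unit_const (k : {poly D}) : lead_coef k \is a GRing.unit -> size k = 1%N ->
    k \is a GRing.unit.
  by move=> uk size_k; rewrite poly_unitE size_k eqxx; rewrite lead_coefE size_k in uk.
have g_neq0 : g != 0 by apply: contraTneq ug => ->; rewrite lead_coef0 unitr0.
have h_neq0 : h != 0 by apply: contraTneq uh => ->; rewrite lead_coef0 unitr0.
have size_gh : (size g + size h).-1 = size q by rewrite def_q size_mul.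
have size_h_gt0 : (0 < size h)%N by rewrite size_poly_gt0.
have [size_g1|size_g_neq1] := eqVneq (size g) 1%N; first by left; apply: unit_const.
right; apply: unit_const => //.
have dvd_gq : map_poly pi g %| map_poly pi q by rewrite def_q rmorphM dvdp_mulr.
have size_pig : size (map_poly pi g) != 1%N by rewrite size_pi.
move/eqp_size: (irr_q _ size_pig dvd_gq); rewrite size_pi // size_piq => size_gq.
by move: size_gh; rewrite -size_gq; lia.
Qed.

End IrreducibleLift.

Lemma fin_max_ideal_avoiding (D : idomainType) (d : D) :
  fin_max_ideals_trivial_intersection D -> d != 0 ->
  exists I, [/\ is_maximal_ideal I, finite_index I & ~ I d].
Proof.
move=> trivI d_neq0; apply: NNPP => noI; move/eqP: d_neq0; apply.
apply: trivI => I maxI finI; apply: NNPP => Id.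
by apply: noI; exists I.
Qed.

(** If the maximal ideals of finite index meet in [(0)], every monic
    polynomial of degree [n > 0] is congruent modulo any [d != 0] to a monic
    polynomial of degree [n] irreducible in [D[x]]: pick a maximal ideal [I]
    of finite index avoiding [d], an irreducible [q0] of degree [n] over the
    finite field [D / I], and glue [p] and a lift of [q0] using [u d = 1]
    modulo [I]. *)
Lemma monic_congr_irreducible (D : idomainType) n (d : D) (p : {poly D}) :
  fin_max_ideals_trivial_intersection D -> (0 < n)%N -> d != 0 ->
  p \is monic -> size p = n.+1 ->
  exists q : {poly D},
    [/\ q \is monic, irreducible_in_polyring q, size q = n.+1 & dvdmod d (q - p)].
Proof.
move=> trivI n_gt0 d_neq0 p_monic size_p.
have [I [maxI finI Id]] := fin_max_ideal_avoiding trivI d_neq0.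
have [F [pi [ker_pi pi_surj]]] := residue_finite_field maxI finI.
have [q0 [q0_monic size_q0 irr_q0]] := exists_irreducible_poly F n_gt0.
have [u Iud] := maximal_ideal_inverse maxI Id.
have pi_ud : pi (u * d) = 1.
  by apply/eqP; rewrite -subr_eq0 -(rmorph1 pi) -rmorphB; apply/eqP/ker_pi.
have lift_ex (y : F) : exists x, pi x == y by have [x <-] := pi_surj y; exists x.
pose c := \poly_(j < n) xchoose (lift_ex (q0`_j - pi p`_j)).
have size_udc : (size ((u * d) *: c) < size p)%N.
  by rewrite size_p ltnS (leq_trans (size_scale_leq _ _)) ?size_poly.
have q_monic : p + (u * d) *: c \is monic.
  by rewrite monicE lead_coefDl // (monicP p_monic).
exists (p + (u * d) *: c); split => //.
- apply: (irreducible_lift (pi := pi)) => //.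
  suff -> : map_poly pi (p + (u * d) *: c) = q0 by [].
  rewrite rmorphD /= map_polyZ pi_ud scale1r; apply/polyP => j.
  rewrite coefD !coef_map coef_poly /=.
  case: ltnP => [_|le_nj]; first by rewrite (eqP (xchooseP (lift_ex _))) addrC subrK.
  rewrite rmorph0 addr0; have [->|neq_jn] := eqVneq j n.
    have /monicP : p \is monic := p_monic; rewrite lead_coefE size_p => ->.
    by have /monicP := q0_monic; rewrite lead_coefE size_q0 rmorph1 => ->.
  by rewrite !nth_default ?rmorph0 // ?size_p ?size_q0 ltn_neqAle eq_sym neq_jn.
- by rewrite size_polyDl.
- by exists (u *: c); rewrite addrAC subrr add0r scalerA mulrC.
Qed.

(** Part (2): under the hypothesis on maximal ideals of finite index, it is
    enough that [d] divides [g(C)] for companion matrices of irreducible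
    polynomials, since every companion matrix is congruent modulo [d] to one of
    those. *)
Lemma dvdmod_horner_from_irreducible_companions (D : idomainType) n' (d : D)
    (g : {poly D}) :
  fin_max_ideals_trivial_intersection D -> d != 0 ->
  (forall C : 'M[D]_n'.+1, In_ C -> dvdmod d (horner_mx C g)) ->
  forall (p : {poly D}) (hp : size p = n'.+2), p \is monic ->
    dvdmod d (horner_mx (companion_n hp) g).
Proof.
move=> trivI d_neq0 dvd_In p hp p_monic.
have [q [q_monic q_irr hq dvd_qp]] := monic_congr_irreducible trivI (ltn0Sn n') d_neq0 p_monic hp.
apply: (dvdmod_subr (dvd_In _ _)); first by exists q, hq.
exact/dvdmod_horner_mx/dvdmod_companion.
Qed.

Theorem mainTheorem2 (D : idomainType) (n : nat) (hn : (0 < n)%N) :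
  (forall f : {poly {fraction D}}, IntK_full n f <-> IntK (@Cn D n) f) /\
  (fin_max_ideals_trivial_intersection D ->
   forall f : {poly {fraction D}}, IntK_full n f <-> IntK (@In_ D n) f).
Proof.
case: n hn => // n' _; split => [|trivI] f.
all: have [d [g [d_neq0 def_f]]] := poly_common_denominator f.
all: rewrite /IntK_full !(IntK_dvdmod _ d_neq0 def_f).
all: split => [dvd_all C _ | dvd_S A _]; first exact: dvd_all.
  by apply: dvdmod_horner_from_companions => p hp p_monic; apply: dvd_S; exists p, hp.
exact/dvdmod_horner_from_companions/dvdmod_horner_from_irreducible_companions.
Qed.
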